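(* For $p>0$ let $\Upsilon^m_p$ be the set of $X\in\coprod_{N\ge1}(\mathbb{C}^{N\times N})^m$ for which the series $\sum_{w\in\mathcal{F}_m}p^{|w|}(X^w)^\ast X^w$ converges. Then $\mathcal{B}_{\mathbb{D}^m}=(\mathbb{D}^m)_{nc}\cap\Upsilon^m_1$ and $\mathcal{B}_{\mathbb{B}^m}=(\mathbb{B}^m)_{nc}\cap\Upsilon^m_m$. Moreover, if $X\in\Upsilon^m_p\cap(\mathbb{C}^{N\times N})^m$, then $\{X^w\}_{w\in\mathcal{F}_m}\in\ell^2_{1/p}(\mathcal{F}_m)\otimes\mathbb{C}^{N\times N}$, i.e. for every entry position $(i,j)$ the sequence $\{(X^w)_{i,j}\}_{w\in\mathcal{F}_m}$ lies in $\ell^2_{1/p}(\mathcal{F}_m)$.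
   Context: $\mathcal{F}_m$ is the free monoid on $\{1,\dots,m\}$, $|w|$ the length; $X^w=X_{w_1}\cdots X_{w_t}$, $X^\emptyset=I_N$. For $q>0$, $\ell^2_q(\mathcal{F}_m)$ is the space of complex sequences $\{f_w\}$ with $\sum_{w}q^{-|w|}|f_w|^2<\infty$; $\ell^2(\mathcal{F}_m)=\ell^2_1(\mathcal{F}_m)$. $(\mathbb{D}^m)_{nc}=\coprod_N\{X\in(\mathbb{C}^{N\times N})^m:\|X_j\|<1\ \forall j\}$, $(\mathbb{B}^m)_{nc}=\coprod_N\{X:\sum_iX_i^\ast X_i<I_N\}$. Noncommutative functions on $\Omega$ (one of these) map level $N$ to $\mathbb{C}^{N\times N}$ and respect direct sums and similarities; $\mathcal{A}_\Omega$ consists of those locally bounded on slices separately in every matrix dimension, and each $f\in\mathcal{A}_\Omega$ has Taylor--Taylor coefficients $f_w$ at $0$ with $f(X)=\sum_l\sum_{|w|=l}f_wX^w$ on $\Omega$. With $\operatorname{Tr}$ the non-normalized trace, $\mu_N$ the product Haar probability on $\mathcal{U}(N)^m$ (boundary of the polydisc at level $N$), and $\nu_N$ the unique $\mathcal{U}(mN)$-invariant probability on $\{X:\sum_iX_i^\ast X_i=I_N\}$ (boundary of the ball at level $N$; action by left multiplication on $[X_1;\dots;X_m]\in\mathbb{C}^{mN\times N}$), $H^2(\Omega)$ is the set of $f\in\mathcal{A}_\Omega$ with $\sup_N\sup_{0<r<1}\int\frac1N\operatorname{Tr}(f(rX)^\ast f(rX))\,d\omega_N<\infty$, normed by $\|f\|^2=\sum_w|f_w|^2$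 (polydisc) or $\sum_wm^{-|w|}|f_w|^2$ (ball). $\mathcal{B}_{\mathbb{D}^m}$ (resp. $\mathcal{B}_{\mathbb{B}^m}$) is the set of $X\in(\mathbb{D}^m)_{nc}$ (resp. $(\mathbb{B}^m)_{nc}$) for which the evaluation map $f\mapsto f(X)$ from $H^2$ of the corresponding set to the matrices is bounded. *)

From HB Require Import structures.
From mathcomp Require Import all_boot all_order all_algebra.
From mathcomp Require Import all_classical all_reals all_analysis.
From mathcomp.real_closed Require Import complex.
Set Implicit Arguments. Unset Strict Implicit. Unset Printing Implicit Defensive.
Import Order.TTheory GRing.Theory Num.Theory.
Import numFieldNormedType.Exports.
Local Open Scope classical_set_scope.
Local Open Scope ring_scope.

HB.instance Definition _ (R : realType) := isPointed.Build R[i] (0 : R[i]).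
HB.instance Definition _ (R : realType) (N : nat) :=
  isPointed.Build 'M[R[i]]_N (0 : 'M[R[i]]_N).

Section NCDefs.
Variables (R : realType) (m : nat).
Local Notation C := R[i].

Definition tup (N : nat) := 'I_m -> 'M[C]_N.

Definition cmod2 (z : C) : R := complex.Re z ^+ 2 + complex.Im z ^+ 2.

Definition adj (a b : nat) (A : 'M[C]_(a, b)) : 'M[C]_(b, a) := (map_mx conjc A)^T.

Definition sqn (N : nat) (v : 'cV[C]_N) : R :=
  \sum_(k < N) cmod2 (v k 0).

(** words of the free monoid F_m are sequences over 'I_m; X^w = X_{w_1}...X_{w_t} *)
Definition wpow (N : nat) (X : tup N) (w : seq 'I_m) : 'M[C]_N :=
  foldr (fun i A => X i *m A) 1%:M w.

Definition mx_cvg (a b : nat) (u : nat -> 'M[C]_(a, b)) (L : 'M[C]_(a, b)) : Prop :=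
  forall i j,
    ((fun n => complex.Re (u n i j) : R^o) @ \oo --> (complex.Re (L i j) : R^o)) /\
    ((fun n => complex.Im (u n i j) : R^o) @ \oo --> (complex.Im (L i j) : R^o)).

Definition mx_converges (a b : nat) (u : nat -> 'M[C]_(a, b)) : Prop :=
  exists L, mx_cvg u L.

Definition Upsilon (p : R) (N : nat) (X : tup N) : Prop :=
  mx_converges (fun n => \sum_(l < n) \sum_(w : l.-tuple 'I_m)
                          (p ^+ l)%:C%C *: (adj (wpow X w) *m wpow X w)).

(** (D^m)_nc at level N : every X_j has operator norm < 1 *)
Definition polydisc (N : nat) (X : tup N) : Prop :=
  forall j, exists c : R, 0 <= c < 1 /\
    forall v : 'cV[C]_N, sqn (X j *m v) <= c ^+ 2 * sqn v.

(** (B^m)_nc at level N : sum_i X_i^* X_i < I_N (strictly, in the Loewner order) *)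
Definition ncball (N : nat) (X : tup N) : Prop :=
  forall v : 'cV[C]_N, v != 0 -> \sum_(i < m) sqn (X i *m v) < sqn v.

Definition unitary (n : nat) (U : 'M[C]_n) : Prop := adj U *m U = 1%:M.

Definition torus (N : nat) (X : tup N) : Prop := forall i, unitary (X i).
Definition ncsphere (N : nat) (X : tup N) : Prop :=
  \sum_(i < m) adj (X i) *m X i = 1%:M.

(** stacking [X_1; ...; X_m] in C^{mN x N} and back *)
Definition stack (N : nat) (X : tup N) : 'M[C]_(m * N, N) :=
  \matrix_(k < m * N, j < N) (mxvec (\matrix_(i < m, a < N) X i a j)) 0 k.
Definition unstack (N : nat) (S : 'M[C]_(m * N, N)) : tup N :=
  fun i => \matrix_(a < N, j < N) (vec_mx (col j S)^T : 'M[C]_(m, N)) i a.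

(** Borel sigma-algebra on (C^{NxN})^m : generated by real/imaginary parts of entries *)
Definition entry_gen (N : nat) : set (set (tup N)) :=
  [set A | exists (i : 'I_m) (a b : 'I_N) (re : bool) (B : set R),
     measurable B /\
     A = (fun X : tup N => (if re then @complex.Re R else @complex.Im R) (X i a b)) @^-1` B].

Definition MT (N : nat) : measurableType _ := g_sigma_algebraType (@entry_gen N).

(** mu_N : product Haar probability on U(N)^m (characterized as the invariant
    probability supported on U(N)^m) *)
Definition is_Haar_torus (mu : forall N, probability (MT N) R) : Prop :=
  forall N, (0 < N)%N ->
    mu N (~` [set X | torus X]) = 0%E /\
    forall U : tup N, torus U -> forall A : set (MT N), measurable A ->
      mu N ((fun X : MT N => (fun i => U i *m X i) : MT N) @^-1` A) = mu N A.

(** nu_N : the U(mN)-invariant probability on {X : sum X_i^* X_i = I_N} *)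
Definition is_invariant_sphere (nu : forall N, probability (MT N) R) : Prop :=
  forall N, (0 < N)%N ->
    nu N (~` [set X | ncsphere X]) = 0%E /\
    forall U : 'M[C]_(m * N), unitary U -> forall A : set (MT N), measurable A ->
      nu N ((fun X : MT N => unstack (U *m stack X) : MT N) @^-1` A) = nu N A.

(** functions on the nc set Omega (values outside Omega are irrelevant) *)
Definition ncfun := forall N, tup N -> 'M[C]_N.

Definition is_nc (dom : forall N, tup N -> Prop) (f : ncfun) : Prop :=
  (forall N1 N2 (X : tup N1) (Y : tup N2), (0 < N1)%N -> (0 < N2)%N ->
     dom N1 X -> dom N2 Y ->
     f (N1 + N2)%N (fun i => block_mx (X i) 0 0 (Y i)) = block_mx (f N1 X) 0 0 (f N2 Y)) /\
  (forall N (X : tup N) (S : 'M[C]_N), (0 < N)%N -> S \in unitmx ->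
     dom N X -> dom N (fun i => S *m X i *m invmx S) ->
     f N (fun i => S *m X i *m invmx S) = S *m f N X *m invmx S).

Definition loc_bdd_slices (dom : forall N, tup N -> Prop) (f : ncfun) : Prop :=
  forall N (X Z : tup N), (0 < N)%N -> dom N X ->
    exists eps : R, 0 < eps /\ exists M : R, forall t : C, cmod2 t < eps ->
      dom N (fun i => X i + t *: Z i) ->
      forall a b, cmod2 (f N (fun i => X i + t *: Z i) a b) <= M.

Definition A_Omega (dom : forall N, tup N -> Prop) (f : ncfun) : Prop :=
  is_nc dom f /\ loc_bdd_slices dom f.

Definition is_TT_coeffs (dom : forall N, tup N -> Prop) (f : ncfun)
    (c : seq 'I_m -> C) : Prop :=
  forall N (X : tup N), (0 < N)%N -> dom N X ->
    mx_cvg (fun n => \sum_(l < n) \sum_(w : l.-tuple 'I_m) c w *: wpow X w) (f N X).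

Definition in_H2 (dom : forall N, tup N -> Prop) (om : forall N, probability (MT N) R)
    (f : ncfun) : Prop :=
  A_Omega dom f /\
  exists M : R, forall N, (0 < N)%N -> forall r : R, 0 < r < 1 ->
    (\int[om N]_(X in setT)
        ((N%:R)^-1 * complex.Re (\tr (adj (f N (fun i => r%:C%C *: X i))
                                       *m f N (fun i => r%:C%C *: X i))))%:E <= M%:E)%E.

Definition l2q_norm2 (q : R) (c : seq 'I_m -> C) : \bar R :=
  (\sum_(l <oo) (\sum_(w : l.-tuple 'I_m) ((q ^- l) * cmod2 (c w))%:E))%E.

(** B_Omega: points of Omega at which evaluation f |-> f(X) is bounded on H^2;
    the H^2 norm is ||f||^2 = l2q_norm2 q (coefficients of f) *)
Definition bounded_eval_pt (dom : forall N, tup N -> Prop)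
    (om : forall N, probability (MT N) R) (q : R) (N : nat) (X : tup N) : Prop :=
  dom N X /\
  exists K : R, forall (f : ncfun) (c : seq 'I_m -> C),
    in_H2 dom om f -> is_TT_coeffs dom f c ->
    forall a b, ((cmod2 (f N X a b))%:E <= K%:E * l2q_norm2 q c)%E.

End NCDefs.

(* Write S_n^ab(X) = sum_{|w| < n} q^|w| |(X^w)_ab|^2.  All three statements
   reduce to the boundedness of these partial sums.  The diagonal entries of the
   partial sums of sum_w q^|w| (X^w)^* X^w are the nondecreasing sums
   sum_a S_n^ab, so Upsilon_q bounds them; conversely, since
   |Re (conj x y)|, |Im (conj x y)| <= |x|^2 + |y|^2, bounded S_n^ab make every
   entry of that series absolutely convergent, and they are the partial sums of
   the l^2_{1/q} norms of the entry sequences.  Given a bound K,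
   Cauchy-Schwarz with weights q^-|w| and q^|w| gives |f(X)_ab|^2 <= K ||f||^2
   for every f in H^2.  Conversely, evaluating at X the truncated polynomial with
   coefficients q^|w| conj((X^w)_ab) yields S_n^ab <= K; such polynomials lie in
   H^2 because both domains consist of tuples of contractions, on which they are
   bounded. *)

From HB Require Import structures.
From mathcomp Require Import all_boot all_order all_algebra.
From mathcomp Require Import all_classical all_reals all_analysis.
From mathcomp.real_closed Require Import complex.
From mathcomp Require Import ring lra.
Import Order.TTheory GRing.Theory Num.Theory.
Import numFieldNormedType.Exports.
Local Open Scope ring_scope.
Set Implicit Arguments. Unset Strict Implicit. Unset Printing Implicit Defensive.

Section ComplexFacts.
Variable R : realType.
Local Notation C := R[i].
Local Notation normc := (@Normc.normc R).

Lemma cmod2_ge0 (z : C) : 0 <= cmod2 z.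
Proof. by rewrite addr_ge0 ?sqr_ge0. Qed.

Lemma cmod2_real (x : R) : cmod2 x%:C%C = x ^+ 2.
Proof. by rewrite /cmod2 /= expr0n /= addr0. Qed.

Lemma cmod20 : cmod2 (0 : C) = 0.
Proof. by rewrite cmod2_real expr0n. Qed.

Lemma sqr_Normc (z : C) : normc z ^+ 2 = cmod2 z.
Proof. by case: z => a b; rewrite /Normc.normc sqr_sqrtr // addr_ge0 ?sqr_ge0. Qed.

Lemma cmod2M (x y : C) : cmod2 (x * y) = cmod2 x * cmod2 y.
Proof. by rewrite -!sqr_Normc Normc.normcM exprMn. Qed.

Lemma cmod2J (x : C) : cmod2 (conjc x) = cmod2 x.
Proof. by case: x => a b; rewrite /cmod2 /= sqrrN. Qed.

Lemma mulJc (z : C) : conjc z * z = (cmod2 z)%:C%C.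
Proof.
case: z => a b; apply/eqP; rewrite eq_complex /= /cmod2 /=.
by rewrite mulNr opprK !expr2 eqxx mulNr mulrC subrr eqxx.
Qed.

Lemma Normc_sum (I : Type) (r : seq I) (F : I -> C) :
  normc (\sum_(i <- r) F i) <= \sum_(i <- r) normc (F i).
Proof.
elim/big_rec2: _ => [|i y1 y2 _ IH]; first by rewrite Normc.normc0.
exact: le_trans (le_normcD _ _) (lerD _ IH).
Qed.

Lemma Re_sum (I : Type) (r : seq I) (F : I -> C) :
  complex.Re (\sum_(i <- r) F i) = \sum_(i <- r) complex.Re (F i).
Proof. exact: (raddf_sum (@complex.Re R : Rcomplex R -> R)). Qed.

Lemma Im_sum (I : Type) (r : seq I) (F : I -> C) :
  complex.Im (\sum_(i <- r) F i) = \sum_(i <- r) complex.Im (F i).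
Proof. exact: (raddf_sum (@complex.Im R : Rcomplex R -> R)). Qed.

Lemma Re_realM (x : R) (z : C) : complex.Re (x%:C%C * z) = x * complex.Re z.
Proof. by case: z => a b /=; rewrite mul0r subr0. Qed.

Lemma Im_realM (x : R) (z : C) : complex.Im (x%:C%C * z) = x * complex.Im z.
Proof. by case: z => a b /=; rewrite mul0r addr0. Qed.

Lemma normr_Re_mulJ_le (x y : C) :
  `|complex.Re (conjc x * y)| <= cmod2 x + cmod2 y.
Proof.
case: x => a b; case: y => c d; rewrite /cmod2 /= ler_norml.
have := sqr_ge0 (a - c); have := sqr_ge0 (a + c).
have := sqr_ge0 (b - d); have := sqr_ge0 (b + d).
by move=> *; apply/andP; split; nra.
Qed.

Lemma normr_Im_mulJ_le (x y : C) :
  `|complex.Im (conjc x * y)| <= cmod2 x + cmod2 y.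
Proof.
case: x => a b; case: y => c d; rewrite /cmod2 /= ler_norml.
have := sqr_ge0 (a - d); have := sqr_ge0 (a + d).
have := sqr_ge0 (b - c); have := sqr_ge0 (b + c).
by move=> *; apply/andP; split; nra.
Qed.

End ComplexFacts.

Lemma discriminant_le (R : realFieldType) (a b c : R) : 0 <= a ->
  (forall t, 0 <= t ^+ 2 * a - 2 * t * c + b) -> c ^+ 2 <= a * b.
Proof.
move=> a_ge0 quad_ge0; have [a_gt0|a_le0] := ltrP 0 a.
  have := quad_ge0 (c / a).
  have -> : (c / a) ^+ 2 * a - 2 * (c / a) * c + b = b - c ^+ 2 / a.
    by field; rewrite gt_eqF.
  by rewrite subr_ge0 ler_pdivrMr // mulrC.
have a0 : a = 0 by apply/eqP; rewrite eq_le a_le0 a_ge0.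
rewrite a0 mul0r; have [->|c_neq0] := eqVneq c 0; first by rewrite expr0n.
have := quad_ge0 ((b + 1) / (2 * c)).
have -> : ((b + 1) / (2 * c)) ^+ 2 * a - 2 * ((b + 1) / (2 * c)) * c + b = -1.
  by rewrite a0 mulr0 sub0r; field.
by rewrite ler0N1.
Qed.

Section WordSums.
Variables (R : realFieldType) (m : nat).

Definition wsum n (F : nat -> seq 'I_m -> R) : R :=
  \sum_(l < n) \sum_(w : l.-tuple 'I_m) F l w.

Lemma eq_wsum n F G :
  (forall l w, (l < n)%N -> size w = l -> F l w = G l w) -> wsum n F = wsum n G.
Proof.
by move=> FG; apply: eq_bigr => l _; apply: eq_bigr => w _; rewrite FG ?size_tuple.
Qed.

Lemma ler_wsum n F G : (forall l w, F l w <= G l w) -> wsum n F <= wsum n G.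
Proof. by move=> FG; apply: ler_sum => l _; apply: ler_sum. Qed.

Lemma wsum_ge0 n F : (forall l w, 0 <= F l w) -> 0 <= wsum n F.
Proof. by move=> F_ge0; apply: sumr_ge0 => l _; apply: sumr_ge0. Qed.

Lemma wsumD n F G : wsum n (fun l w => F l w + G l w) = wsum n F + wsum n G.
Proof. by rewrite /wsum -big_split; apply: eq_bigr => l _; rewrite big_split. Qed.

Lemma wsumMl n k F : wsum n (fun l w => k * F l w) = k * wsum n F.
Proof. by rewrite /wsum mulr_sumr; apply: eq_bigr => l _; rewrite mulr_sumr. Qed.

Lemma sum_wsum n (I : finType) (F : I -> nat -> seq 'I_m -> R) :
  \sum_i wsum n (F i) = wsum n (fun l w => \sum_i F i l w).
Proof. by rewrite /wsum exchange_big; apply: eq_bigr => l _; rewrite exchange_big. Qed.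

Lemma wsumS n F : wsum n.+1 F = wsum n F + \sum_(w : n.-tuple 'I_m) F n w.
Proof. by rewrite /wsum big_ord_recr. Qed.

Lemma nondecreasing_wsum F : (forall l w, 0 <= F l w) ->
  nondecreasing_seq (fun n => wsum n F).
Proof.
move=> F_ge0; apply/nondecreasing_seqP => n.
by rewrite wsumS lerDl; apply: sumr_ge0.
Qed.

Lemma wsum_CauchySchwarz n (u a b : nat -> seq 'I_m -> R) :
  (forall l w, 0 < u l w) ->
  wsum n (fun l w => a l w * b l w) ^+ 2 <=
  wsum n (fun l w => u l w * a l w ^+ 2) * wsum n (fun l w => b l w ^+ 2 / u l w).
Proof.
move=> u_gt0; apply: discriminant_le => [|t].
  by apply: wsum_ge0 => l w; rewrite mulr_ge0 ?sqr_ge0 ?ltW.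
have : 0 <= wsum n (fun l w => (t * u l w * a l w - b l w) ^+ 2 / u l w).
  by apply: wsum_ge0 => l w; rewrite divr_ge0 ?sqr_ge0 ?ltW.
rewrite (eq_wsum (G := fun l w => t ^+ 2 * (u l w * a l w ^+ 2)
   + (- (2 * t)) * (a l w * b l w) + b l w ^+ 2 / u l w)); last first.
  by move=> l w _ _; field; rewrite gt_eqF.
by rewrite !wsumD !wsumMl; congr (0 <= _); ring.
Qed.

End WordSums.

Section WordPowers.
Variables (R : realType) (m : nat).
Local Notation C := R[i].

Definition contractive N (Y : tup R m N) :=
  forall j (v : 'cV[C]_N), sqn (Y j *m v) <= sqn v.

Lemma sqn_ge0 N (v : 'cV[C]_N) : 0 <= sqn v.
Proof. by apply: sumr_ge0 => k _; apply: cmod2_ge0. Qed.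

Lemma sqn_col_mx N1 N2 (u : 'cV[C]_N1) (v : 'cV[C]_N2) :
  sqn (col_mx u v) = sqn u + sqn v.
Proof.
rewrite /sqn big_split_ord /=.
by congr (_ + _); apply: eq_bigr => k _; rewrite ?col_mxEu ?col_mxEd.
Qed.

Lemma sqn_mul_delta N (W : 'M[C]_N) b :
  sqn (W *m delta_mx b 0) = \sum_a cmod2 (W a b).
Proof. by rewrite -colE; apply: eq_bigr => a _; rewrite mxE. Qed.

Lemma sqn_delta N (b : 'I_N) : sqn (delta_mx b 0 : 'cV[C]_N) = 1.
Proof.
rewrite /sqn (bigD1 b) //= big1 => [|k /negbTE kb]; rewrite mxE ?kb ?eqxx /=.
  by rewrite cmod2_real expr1n addr0.
by rewrite cmod20.
Qed.

Lemma polydisc_contractive N (Y : tup R m N) : polydisc Y -> contractive Y.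
Proof.
move=> hY j v; have [c [/andP[c_ge0 c_lt1] hc]] := hY j.
apply: le_trans (hc v) _; rewrite -[leRHS]mul1r ler_wpM2r ?sqn_ge0 //.
by rewrite expr2 mulr_ile1 // ltW.
Qed.

Lemma ncball_contractive N (Y : tup R m N) : ncball Y -> contractive Y.
Proof.
move=> hY j v; have [->|v_neq0] := eqVneq v 0; first by rewrite mulmx0.
apply: le_trans (ltW (hY v v_neq0)); rewrite (bigD1 j) //= lerDl.
by apply: sumr_ge0 => i _; apply: sqn_ge0.
Qed.

Lemma contractive_block N1 N2 (X : tup R m N1) (Y : tup R m N2) :
  contractive X -> contractive Y ->
  contractive (fun i => block_mx (X i) 0 0 (Y i) : 'M[C]_(N1 + N2)).
Proof.
move=> hX hY j v; rewrite -(vsubmxK v) mul_block_col !mul0mx addr0 add0r.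
by rewrite !sqn_col_mx lerD.
Qed.

Lemma contractive_wpow N (Y : tup R m N) w v :
  contractive Y -> sqn (wpow Y w *m v) <= sqn v.
Proof.
move=> hY; elim: w v => [|i w IH] v /=; first by rewrite mul1mx.
by rewrite -mulmxA; apply: le_trans (hY i _) (IH v).
Qed.

Lemma contractive_wpow_col N (Y : tup R m N) w b :
  contractive Y -> \sum_a cmod2 (wpow Y w a b) <= 1.
Proof. by move=> hY; rewrite -sqn_mul_delta -(sqn_delta b) contractive_wpow. Qed.

Lemma wpow_block N1 N2 (X : tup R m N1) (Y : tup R m N2) w :
  wpow (fun i => block_mx (X i) 0 0 (Y i) : 'M[C]_(N1 + N2)) w =
  block_mx (wpow X w) 0 0 (wpow Y w).
Proof.
elim: w => [|i w IH] /=; first by rewrite scalar_mx_block.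
by rewrite IH mulmx_block !mulmx0 !mul0mx !addr0 !add0r.
Qed.

Lemma wpow_conj N (X : tup R m N) (S : 'M[C]_N) w : S \in unitmx ->
  wpow (fun i => S *m X i *m invmx S) w = S *m wpow X w *m invmx S.
Proof.
move=> S_unit; elim: w => [|i w IH] /=; first by rewrite mulmx1 mulmxV.
by rewrite IH !mulmxA -[_ *m invmx S *m S]mulmxA mulVmx // mulmx1.
Qed.

End WordPowers.

Section TruncatedPolynomials.
Variables (R : realType) (m : nat).
Local Notation C := R[i].

Definition ncpoly n (c : seq 'I_m -> C) N (Y : tup R m N) : 'M[C]_N :=
  \sum_(l < n) \sum_(w : l.-tuple 'I_m) c w *: wpow Y w.

Lemma ncpoly_entry n c N (Y : tup R m N) a b :
  ncpoly n c Y a b = \sum_(l < n) \sum_(w : l.-tuple 'I_m) c w * wpow Y w a b.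
Proof.
rewrite summxE; apply: eq_bigr => l _; rewrite summxE.
by apply: eq_bigr => w _; rewrite mxE.
Qed.

Lemma cmod2_ncpoly_le n c N (Y : tup R m N) (u : nat -> seq 'I_m -> R) a b :
  (forall l w, 0 < u l w) ->
  cmod2 (ncpoly n c Y a b) <=
  wsum n (fun l w => u l w * cmod2 (c w)) *
  wsum n (fun l w => cmod2 (wpow Y w a b) / u l w).
Proof.
move=> u_gt0; rewrite ncpoly_entry -sqr_Normc.
set nc := @Normc.normc R.
have nc_ge0 z : 0 <= nc z by case: z => x y; apply: sqrtr_ge0.
have tri : nc (\sum_(l < n) \sum_(w : l.-tuple 'I_m) c w * wpow Y w a b) <=
           wsum n (fun l w => nc (c w) * nc (wpow Y w a b)).
  apply: le_trans; first exact: Normc_sum.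
  apply: ler_sum => l _; apply: le_trans; first exact: Normc_sum.
  by apply: ler_sum => w _; rewrite Normc.normcM.
apply: le_trans (_ : wsum n (fun l w => nc (c w) * nc (wpow Y w a b)) ^+ 2 <= _).
  by rewrite !expr2 (ler_pM (nc_ge0 _) (nc_ge0 _) tri tri).
apply: le_trans (wsum_CauchySchwarz _ _ _ u_gt0) _.
by under eq_wsum => l w _ _ do rewrite sqr_Normc;
  under [X in _ * X]eq_wsum => l w _ _ do rewrite sqr_Normc.
Qed.

Definition ncpoly_ub n (c : seq 'I_m -> C) : R :=
  wsum n (fun _ w => cmod2 (c w)) * wsum n (fun _ (_ : seq 'I_m) => 1).

Lemma ncpoly_ub_ge0 n c : 0 <= ncpoly_ub n c.
Proof. by rewrite mulr_ge0 // wsum_ge0 // => *; rewrite ?cmod2_ge0. Qed.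

Lemma col_ncpoly_le n c N (Y : tup R m N) b : contractive Y ->
  \sum_a cmod2 (ncpoly n c Y a b) <= ncpoly_ub n c.
Proof.
move=> hY; apply: le_trans (_ : \sum_a wsum n (fun _ w => cmod2 (c w)) *
    wsum n (fun _ w => cmod2 (wpow Y w a b)) <= _).
  apply: ler_sum => a _.
  have := cmod2_ncpoly_le (u := fun _ _ => 1) n c Y a b (fun _ _ => ltr01).
  by under eq_wsum do rewrite mul1r; under [X in _ * X]eq_wsum do rewrite divr1.
rewrite -mulr_sumr ler_wpM2l ?wsum_ge0 ?sum_wsum ?ler_wsum // => l w.
  exact: cmod2_ge0.
exact: contractive_wpow_col.
Qed.

Lemma ncpoly_block n c N1 N2 (X : tup R m N1) (Y : tup R m N2) :
  ncpoly n c (fun i => block_mx (X i) 0 0 (Y i) : 'M[C]_(N1 + N2)) =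
  block_mx (ncpoly n c X) 0 0 (ncpoly n c Y).
Proof.
have sum_block (I : Type) (r : seq I) (F : I -> 'M[C]_N1) (G : I -> 'M[C]_N2) :
    \sum_(i <- r) block_mx (F i) 0 0 (G i) =
    block_mx (\sum_(i <- r) F i) 0 0 (\sum_(i <- r) G i).
  elim: r => [|x r IH]; first by rewrite !big_nil block_mx0.
  by rewrite !big_cons IH add_block_mx !addr0.
rewrite /ncpoly -sum_block; apply: eq_bigr => l _; rewrite -sum_block.
by apply: eq_bigr => w _; rewrite wpow_block scale_block_mx !scaler0.
Qed.

Lemma ncpoly_conj n c N (X : tup R m N) (S : 'M[C]_N) : S \in unitmx ->
  ncpoly n c (fun i => S *m X i *m invmx S) = S *m ncpoly n c X *m invmx S.
Proof.
move=> S_unit; rewrite /ncpoly mulmx_sumr mulmx_suml; apply: eq_bigr => l _.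
rewrite mulmx_sumr mulmx_suml; apply: eq_bigr => w _.
by rewrite wpow_conj // scalemxAl scalemxAr.
Qed.

Lemma ncpoly_widen n n' c N (X : tup R m N) :
  (forall w, (n <= size w)%N -> c w = 0) -> (n <= n')%N ->
  ncpoly n' c X = ncpoly n c X.
Proof.
move=> c_trunc; elim: n' => [|n' IH]; first by rewrite leqn0 => /eqP ->.
rewrite leq_eqVlt => /orP[/eqP -> //|]; rewrite ltnS => le_nn'.
rewrite /ncpoly big_ord_recr /= -/(ncpoly n' c X) IH // big1 ?addr0 // => w _.
by rewrite c_trunc ?scale0r // size_tuple.
Qed.

End TruncatedPolynomials.

Section ProbabilityIntegral.
Import HBNNSimple.

(* No measurability of [g] is needed: the integral of a nonnegative function
   is the supremum of the integrals of the simple functions below it. *)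
Lemma probability_integral_le_ub d (T : measurableType d) (R : realType)
    (P : probability T R) (g : T -> R) (B : R) :
  (forall x, 0 <= g x <= B) -> (\int[P]_(x in setT) (g x)%:E <= B%:E)%E.
Proof.
move=> g_bd; rewrite ge0_integralTE => [|x]; last by rewrite lee_fin; case/andP: (g_bd x).
apply: ge_ereal_sup => _ [h h_le <-].
have := integral_nnsfun P measurableT h; rewrite patch_setT => <-.
apply: (@le_trans _ _ (\int[P]_(x in setT) (cst B%:E) x)%E).
  apply: ge0_le_integral => //.
  - by move=> x _; rewrite lee_fin; apply: fun_ge0.
  - by apply/measurable_realfun.measurable_EFinP; apply: measurable_funPT.
  - by move=> x _ /=; apply: le_trans (h_le x) _; rewrite lee_fin; case/andP: (g_bd x).
rewrite integral_cst //; set PT := (X in (_ * X)%E).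
by rewrite (_ : PT = 1%E) ?mule1 //; apply: probability_setT.
Qed.

End ProbabilityIntegral.

Section TestFunctions.
Variables (R : realType) (m : nat).
Local Notation C := R[i].

(* Off the contractive points, where neither domain lives, the test function is
   set to 0, which makes it globally bounded. *)
Definition ncpoly_fun n (c : seq 'I_m -> C) : ncfun R m :=
  fun N Y => if `[< contractive Y >] then ncpoly n c Y else 0.

Lemma ncpoly_funE n c N (Y : tup R m N) :
  contractive Y -> ncpoly_fun n c Y = ncpoly n c Y.
Proof. by move=> hY; rewrite /ncpoly_fun asboolT. Qed.

Lemma col_ncpoly_fun_le n c N (Y : tup R m N) b :
  \sum_a cmod2 (ncpoly_fun n c Y a b) <= ncpoly_ub n c.
Proof.
rewrite /ncpoly_fun; case: asboolP => hY; first exact: col_ncpoly_le.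
by rewrite big1 ?ncpoly_ub_ge0 // => a _; rewrite mxE cmod20.
Qed.

Lemma cmod2_ncpoly_fun_le n c N (Y : tup R m N) a b :
  cmod2 (ncpoly_fun n c Y a b) <= ncpoly_ub n c.
Proof.
apply: le_trans (col_ncpoly_fun_le n c Y b).
by rewrite (bigD1 a) //= lerDl sumr_ge0 // => *; apply: cmod2_ge0.
Qed.

Lemma Re_tr_adjM N (P : 'M[C]_N) :
  complex.Re (\tr (adj P *m P)) = \sum_b \sum_a cmod2 (P a b).
Proof.
rewrite /mxtrace Re_sum; apply: eq_bigr => b _.
by rewrite mxE Re_sum; apply: eq_bigr => a _; rewrite /adj !mxE mulJc.
Qed.

Lemma normalized_tr_ncpoly_fun n c N (Y : tup R m N) : (0 < N)%N ->
  0 <= N%:R^-1 * complex.Re (\tr (adj (ncpoly_fun n c Y) *m ncpoly_fun n c Y))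
    <= ncpoly_ub n c.
Proof.
move=> N_gt0; rewrite Re_tr_adjM; apply/andP; split.
  rewrite mulr_ge0 ?invr_ge0 ?ler0n ?sumr_ge0 // => b _.
  by rewrite sumr_ge0 // => a _; apply: cmod2_ge0.
have -> : ncpoly_ub n c = N%:R^-1 * \sum_(b < N) ncpoly_ub n c.
  by rewrite sumr_const card_ord -[ncpoly_ub n c *+ N]mulr_natl mulKf // pnatr_eq0 -lt0n.
by rewrite ler_wpM2l ?invr_ge0 ?ler0n // ler_sum // => b _; apply: col_ncpoly_fun_le.
Qed.

Lemma ncpoly_fun_H2 (dom : forall N, tup R m N -> Prop)
    (om : forall N, probability (MT R m N) R) n c :
  (forall N (Y : tup R m N), dom N Y -> contractive Y) ->
  in_H2 dom om (ncpoly_fun n c).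
Proof.
move=> dom_contr; split; first split; first split.
- move=> N1 N2 X Y _ _ dX dY; rewrite !ncpoly_funE ?ncpoly_block //; try exact: dom_contr.
  by apply: contractive_block; apply: dom_contr.
- by move=> N X S _ S_unit dX dS; rewrite !ncpoly_funE ?ncpoly_conj //; apply: dom_contr.
- move=> N X Z _ _; exists 1; split => //; exists (ncpoly_ub n c) => t _ _ a b.
  exact: cmod2_ncpoly_fun_le.
exists (ncpoly_ub n c) => N N_gt0 r _.
by apply: probability_integral_le_ub => Y; apply: normalized_tr_ncpoly_fun.
Qed.

Lemma ncpoly_fun_TT_coeffs (dom : forall N, tup R m N -> Prop) n c :
  (forall N (Y : tup R m N), dom N Y -> contractive Y) ->
  (forall w, (n <= size w)%N -> c w = 0) ->
  is_TT_coeffs dom (ncpoly_fun n c) c.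
Proof.
move=> dom_contr c_trunc N X _ dX a b; rewrite ncpoly_funE; last exact: dom_contr.
split; apply: cvg_near_cst; near=> n';
  have /(ncpoly_widen X c_trunc) : (n <= n')%N by near: n'; apply: nbhs_infty_ge.
all: by rewrite /ncpoly => ->.
Unshelve. all: by end_near.
Qed.

End TestFunctions.

Section WeightedL2.
Variables (R : realType) (m : nat).
Local Notation C := R[i].

Lemma l2q_norm2_partial q (c : seq 'I_m -> C) n :
  (\sum_(0 <= l < n) \sum_(w : l.-tuple 'I_m) (q ^- l * cmod2 (c w))%:E)%E =
  (wsum n (fun l w => q ^- l * cmod2 (c w)))%:E.
Proof. by rewrite big_mkord -sumEFin; apply: eq_bigr => l _; rewrite sumEFin. Qed.

Lemma l2q_norm2_term_ge0 q (c : seq 'I_m -> C) l : 0 < q ->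
  (0 <= \sum_(w : l.-tuple 'I_m) (q ^- l * cmod2 (c w))%:E)%E.
Proof.
move=> q_gt0; apply: sume_ge0 => w _.
by rewrite lee_fin mulr_ge0 ?cmod2_ge0 ?invr_ge0 ?exprn_ge0 ?ltW.
Qed.

Lemma l2q_norm2_ge_partial q (c : seq 'I_m -> C) n : 0 < q ->
  ((wsum n (fun l w => q ^- l * cmod2 (c w)))%:E <= l2q_norm2 q c)%E.
Proof.
move=> q_gt0; rewrite -l2q_norm2_partial.
by apply: (nneseries_lim_ge (P := xpredT)) => l _ _; apply: l2q_norm2_term_ge0.
Qed.

Lemma l2q_norm2_le q (c : seq 'I_m -> C) K : 0 < q ->
  (forall n, wsum n (fun l w => q ^- l * cmod2 (c w)) <= K) ->
  (l2q_norm2 q c <= K%:E)%E.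
Proof.
move=> q_gt0 c_bd; apply: lime_le.
  by apply: is_cvg_nneseries => l _ _; apply: l2q_norm2_term_ge0.
by apply: nearW => n; rewrite l2q_norm2_partial lee_fin.
Qed.

Lemma l2q_norm2_trunc q (c : seq 'I_m -> C) n : 0 < q ->
  (forall w, (n <= size w)%N -> c w = 0) ->
  l2q_norm2 q c = (wsum n (fun l w => q ^- l * cmod2 (c w)))%:E.
Proof.
move=> q_gt0 c_trunc; rewrite /l2q_norm2 (nneseries_split _ n); last first.
  by move=> l _; apply: l2q_norm2_term_ge0.
rewrite add0n eseries0 ?adde0 ?l2q_norm2_partial // => l le_nl _.
by rewrite big1 // => w _; rewrite c_trunc ?size_tuple // cmod20 mulr0.
Qed.

End WeightedL2.

Section UpsilonSeries.
Variables (R : realType) (m : nat).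
Local Notation C := R[i].

Definition ups_partial (q : R) N (X : tup R m N) n : 'M[C]_N :=
  \sum_(l < n) \sum_(w : l.-tuple 'I_m) (q ^+ l)%:C%C *: (adj (wpow X w) *m wpow X w).

Definition entry_sqsum (q : R) N (X : tup R m N) a b n : R :=
  wsum n (fun l w => q ^+ l * cmod2 (wpow X w a b)).

Definition entry_sqsums_bounded (q : R) N (X : tup R m N) : Prop :=
  exists2 K, 0 < K & forall n a b, entry_sqsum q X a b n <= K.

Lemma ups_partial_entry q N (X : tup R m N) n j k :
  ups_partial q X n j k = \sum_(l < n) \sum_(w : l.-tuple 'I_m)
    (q ^+ l)%:C%C * \sum_a conjc (wpow X w a j) * wpow X w a k.
Proof.
rewrite summxE; apply: eq_bigr => l _; rewrite summxE; apply: eq_bigr => w _.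
by rewrite !mxE; congr (_ * _); apply: eq_bigr => a _; rewrite /adj !mxE.
Qed.

Lemma Re_ups_partial q N (X : tup R m N) n j k :
  complex.Re (ups_partial q X n j k) =
  wsum n (fun l w => q ^+ l * \sum_a complex.Re (conjc (wpow X w a j) * wpow X w a k)).
Proof.
rewrite ups_partial_entry Re_sum; apply: eq_bigr => l _; rewrite Re_sum.
by apply: eq_bigr => w _; rewrite Re_realM Re_sum.
Qed.

Lemma Im_ups_partial q N (X : tup R m N) n j k :
  complex.Im (ups_partial q X n j k) =
  wsum n (fun l w => q ^+ l * \sum_a complex.Im (conjc (wpow X w a j) * wpow X w a k)).
Proof.
rewrite ups_partial_entry Im_sum; apply: eq_bigr => l _; rewrite Im_sum.
by apply: eq_bigr => w _; rewrite Im_realM Im_sum.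
Qed.

Lemma entry_sqsum_ge0 q N (X : tup R m N) a b n : 0 <= q ->
  0 <= entry_sqsum q X a b n.
Proof. by move=> q_ge0; apply: wsum_ge0 => l w; rewrite mulr_ge0 ?exprn_ge0 ?cmod2_ge0. Qed.

Lemma nondecreasing_entry_sqsum q N (X : tup R m N) a b : 0 <= q ->
  nondecreasing_seq (entry_sqsum q X a b).
Proof.
by move=> q_ge0; apply: nondecreasing_wsum => l w; rewrite mulr_ge0 ?exprn_ge0 ?cmod2_ge0.
Qed.

Lemma Re_ups_partial_diag q N (X : tup R m N) n b :
  complex.Re (ups_partial q X n b b) = \sum_a entry_sqsum q X a b n.
Proof.
rewrite Re_ups_partial sum_wsum; apply: eq_wsum => l w _ _.
by rewrite mulr_sumr; apply: eq_bigr => a _; rewrite mulJc.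
Qed.

Lemma Upsilon_entry_sqsums_bounded q N (X : tup R m N) :
  0 < q -> Upsilon q X -> entry_sqsums_bounded q X.
Proof.
move=> q_gt0 [L hL]; exists (1 + \sum_b `|complex.Re (L b b)|).
  by rewrite ltr_pwDl // sumr_ge0.
move=> n a b.
have diag_nd : nondecreasing_seq (fun n => complex.Re (ups_partial q X n b b)).
  move=> n1 n2 le12; rewrite !Re_ups_partial_diag ler_sum // => a' _.
  exact: nondecreasing_entry_sqsum (ltW q_gt0) _ _ le12.
have diag_cvg : cvgn (fun n => complex.Re (ups_partial q X n b b)).
  by apply/cvg_ex; exists (complex.Re (L b b)); apply: (hL b b).1.
have := nondecreasing_cvgn_le diag_nd diag_cvg n.
rewrite (cvg_lim _ (hL b b).1) // => diag_le.
apply: le_trans (_ : complex.Re (ups_partial q X n b b) <= _).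
  rewrite Re_ups_partial_diag (bigD1 a) //= lerDl sumr_ge0 // => a' _.
  exact: entry_sqsum_ge0 (ltW q_gt0).
apply: le_trans diag_le _; apply: le_trans (ler_norm _) _.
by rewrite ler_wpDl // (bigD1 b) //= ler_wpDr // sumr_ge0.
Qed.

Lemma cvgn_wsum_abs (F G : nat -> seq 'I_m -> R) B :
  (forall l w, `|F l w| <= G l w) -> (forall n, wsum n G <= B) ->
  cvgn (fun n => wsum n F).
Proof.
move=> FG G_bd; pose g l := \sum_(w : l.-tuple 'I_m) F l w.
have -> : (fun n => wsum n F) = series g.
  by apply/funext => n; rewrite /series /= big_mkord.
apply: (@normed_cvg _ R^o); apply: nondecreasing_is_cvgn.
  by apply: (nondecreasing_series (P := xpredT)) => l _ _; apply: normr_ge0.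
exists B => _ [n _ <-]; apply: le_trans (G_bd n).
change (\sum_(0 <= l < n) `|g l| <= wsum n G); rewrite big_mkord ler_sum // => l _.
by apply: le_trans (ler_norm_sum _ _ _) _; apply: ler_sum.
Qed.

Lemma cvgn_wsum_mulJ q N (X : tup R m N) (phi : C -> R) j k :
  0 < q -> entry_sqsums_bounded q X ->
  (forall x y, `|phi (conjc x * y)| <= cmod2 x + cmod2 y) ->
  cvgn (fun n => wsum n (fun l w =>
    q ^+ l * \sum_a phi (conjc (wpow X w a j) * wpow X w a k))).
Proof.
move=> q_gt0 [K _ hK] phi_le.
apply: (@cvgn_wsum_abs _ (fun l w => \sum_a
    (q ^+ l * cmod2 (wpow X w a j) + q ^+ l * cmod2 (wpow X w a k))) (N%:R * (K + K))).
  move=> l w; have ql_ge0 : 0 <= q ^+ l by rewrite exprn_ge0 ?ltW.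
  rewrite normrM (ger0_norm ql_ge0).
  apply: le_trans (ler_wpM2l ql_ge0 (ler_norm_sum _ _ _)) _.
  by rewrite mulr_sumr ler_sum // => a _; rewrite -mulrDr ler_wpM2l.
move=> n; rewrite -sum_wsum mulr_natl -[k in _ *+ k]card_ord -sumr_const.
by rewrite ler_sum // => a _; rewrite wsumD (lerD (hK n a j) (hK n a k)).
Qed.

Lemma entry_sqsums_bounded_Upsilon q N (X : tup R m N) :
  0 < q -> entry_sqsums_bounded q X -> Upsilon q X.
Proof.
move=> q_gt0 X_bdd.
have Re_cvg j k : cvgn (fun n => complex.Re (ups_partial q X n j k)).
  rewrite (funext (fun n => Re_ups_partial q X n j k)).
  exact: cvgn_wsum_mulJ q_gt0 X_bdd (@normr_Re_mulJ_le R).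
have Im_cvg j k : cvgn (fun n => complex.Im (ups_partial q X n j k)).
  rewrite (funext (fun n => Im_ups_partial q X n j k)).
  exact: cvgn_wsum_mulJ q_gt0 X_bdd (@normr_Im_mulJ_le R).
exists (\matrix_(j, k) (limn (fun n => complex.Re (ups_partial q X n j k)) +i*
                        limn (fun n => complex.Im (ups_partial q X n j k)))%C).
by move=> j k; rewrite mxE; split; [apply: Re_cvg | apply: Im_cvg].
Qed.

Lemma Upsilon_l2q_norm2_lt_oo p N (X : tup R m N) : 0 < p -> Upsilon p X ->
  forall a b, (l2q_norm2 p^-1 (fun w => wpow X w a b) < +oo)%E.
Proof.
move=> p_gt0 /(Upsilon_entry_sqsums_bounded p_gt0)[K _ hK] a b.
apply: le_lt_trans (ltry K); apply: l2q_norm2_le; first by rewrite invr_gt0.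
move=> n; rewrite (eq_wsum (G := fun l w => p ^+ l * cmod2 (wpow X w a b))) ?hK //.
by move=> l w _ _; rewrite exprVn invrK.
Qed.

End UpsilonSeries.

Section EvaluationBound.
Variables (R : realType) (m : nat).
Implicit Types (dom : forall N, tup R m N -> Prop)
  (om : forall N, probability (MT R m N) R).

Lemma bounded_eval_entry_sqsums dom om (q : R) N (X : tup R m N) : 0 < q ->
  (forall N (Y : tup R m N), dom N Y -> contractive Y) ->
  bounded_eval_pt dom om q X -> entry_sqsums_bounded q X.
Proof.
move=> q_gt0 dom_contr [dX [K hK]]; exists (`|K| + 1).
  by have := normr_ge0 K; lra.
move=> n a b; set S := entry_sqsum q X a b n.
(* The polynomial with coefficients q^|w| conj((X^w)_ab), |w| < n, takes the
   value S at X and has squared H^2 norm S, so that S^2 <= K S. *)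
pose c w := if (size w < n)%N then ((q ^+ size w)%:C * conjc (wpow X w a b))%C else 0.
have c_trunc w : (n <= size w)%N -> c w = 0 by rewrite /c leqNgt => /negbTE ->.
have := hK _ c (ncpoly_fun_H2 om n c dom_contr) (ncpoly_fun_TT_coeffs dom_contr c_trunc) a b.
have -> : ncpoly_fun n c X a b = S%:C%C.
  rewrite ncpoly_funE ?ncpoly_entry; last exact: dom_contr dX.
  rewrite /S /entry_sqsum /wsum rmorph_sum; apply: eq_bigr => l _; rewrite rmorph_sum.
  by apply: eq_bigr => w _; rewrite /c size_tuple ltn_ord -mulrA mulJc rmorphM.
have -> : l2q_norm2 q c = S%:E.
  rewrite (l2q_norm2_trunc q_gt0 c_trunc); congr (_%:E); apply: eq_wsum => l w ln sw.
  by rewrite /c sw ln cmod2M cmod2_real cmod2J; field; rewrite expf_neq0 // gt_eqF.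
rewrite cmod2_real -EFinM lee_fin => S2_le.
have := entry_sqsum_ge0 X a b n (ltW q_gt0); have := ler_norm K.
have := normr_ge0 K; rewrite -/S; move: S2_le; clearbody S; nra.
Qed.

Lemma entry_sqsums_bounded_eval dom om (q : R) N (X : tup R m N) : 0 < q -> (0 < N)%N ->
  dom N X -> entry_sqsums_bounded q X -> bounded_eval_pt dom om q X.
Proof.
move=> q_gt0 N_gt0 dX [K K_gt0 hK]; split => //; exists K => f c _ c_TT a b.
have [Re_cvg Im_cvg] := c_TT N X N_gt0 dX a b.
have partial_le n :
    cmod2 (ncpoly n c X a b) <= wsum n (fun l w => q ^- l * cmod2 (c w)) * K.
  apply: le_trans (cmod2_ncpoly_le (u := fun l _ => q ^- l) n c X a b _) _.
    by move=> l _; rewrite invr_gt0 exprn_gt0.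
  apply: ler_wpM2l.
    by apply: wsum_ge0 => l w; rewrite mulr_ge0 ?cmod2_ge0 ?invr_ge0 ?exprn_ge0 ?ltW.
  rewrite (eq_wsum (G := fun l w => q ^+ l * cmod2 (wpow X w a b))) ?hK //.
  by move=> l w _ _; rewrite invrK mulrC.
have l2_ge0 : (0 <= l2q_norm2 q c)%E.
  by apply: le_trans (l2q_norm2_ge_partial c 0 q_gt0); rewrite /wsum big_ord0.
case E: (l2q_norm2 q c) => [r| |]; last by rewrite E in l2_ge0.
  rewrite -EFinM lee_fin /cmod2 !expr2.
  have entry_cvg := cvgD (cvgM Re_cvg Re_cvg) (cvgM Im_cvg Im_cvg).
  apply: (ler_cvg_to (entry_cvg _ _ _) (cvg_cst (K * r))).
  near=> n; have := partial_le n; rewrite /cmod2 !expr2 => /le_trans; apply.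
  rewrite mulrC ler_wpM2l ?(ltW K_gt0) //.
  by have := l2q_norm2_ge_partial c n q_gt0; rewrite E lee_fin.
by rewrite gt0_muley ?lte_fin // leey.
Unshelve. all: by end_near.
Qed.

Lemma bounded_eval_ptE dom om (q : R) N (X : tup R m N) : 0 < q -> (0 < N)%N ->
  (forall N (Y : tup R m N), dom N Y -> contractive Y) ->
  bounded_eval_pt dom om q X <-> dom N X /\ Upsilon q X.
Proof.
move=> q_gt0 N_gt0 dom_contr; split.
  move=> X_bdd; split; first exact: X_bdd.1.
  exact: entry_sqsums_bounded_Upsilon q_gt0 (bounded_eval_entry_sqsums q_gt0 dom_contr X_bdd).
by move=> [dX /(Upsilon_entry_sqsums_bounded q_gt0)]; apply: entry_sqsums_bounded_eval.
Qed.

End EvaluationBound.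
Unset Implicit Arguments.

Theorem theorem3p9 (R : realType) (m : nat)
    (mu nu : forall N : nat, probability (MT R m N) R) :
  (0 < m)%N ->
  is_Haar_torus mu -> is_invariant_sphere nu ->
  forall (N : nat) (X : tup R m N), (0 < N)%N ->
    (bounded_eval_pt (@polydisc R m) mu 1 X <-> polydisc X /\ Upsilon 1 X) /\
    (bounded_eval_pt (@ncball R m) nu m%:R X <-> ncball X /\ Upsilon m%:R X) /\
    (forall p : R, 0 < p -> Upsilon p X ->
       forall i j : 'I_N, (l2q_norm2 p^-1 (fun w => wpow X w i j) < +oo)%E).
Proof.
move=> m_gt0 _ _ N X N_gt0; split; last split.
- exact: bounded_eval_ptE ltr01 N_gt0 (@polydisc_contractive R m).
- by apply: bounded_eval_ptE N_gt0 (@ncball_contractive R m); rewrite ltr0n.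
- by move=> p; apply: Upsilon_l2q_norm2_lt_oo.
Qed.
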